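(* Let $(\mathcal{H},\langle\cdot,\cdot\rangle)$ be a real Hilbert space with induced norm $\lVert\cdot\rVert$, let $\tau,\tau_s>0$, $\alpha>0$, let $g\in\mathcal{C}^0(\mathbb{R}_{\geq0},\mathbb{R}_{\geq0})$ be monotone increasing with $g(0)=0$, and let $V\in\mathcal{C}^1(\mathbb{R}^2,\mathbb{R})$. Let $x_{s,0}\in\mathbb{R}_{\geq0}$ and $\mathbf{x}_0\in\mathcal{H}$. Assume: (A1) there exist constants $a>0$, $b\geq0$ and an increasing $h\in\mathcal{C}^0(\mathbb{R}_{\geq0},\mathbb{R}_{\geq0})$ with $h(0)=0$ such that $a r-b\leq\frac{\partial}{\partial r}V(r,x_s)$ for all $r\geq0$ and all $x_s\geq0$, and such that for all $\overline r\geq0$, all $r\in[0,\overline r]$ and all $x_s\in[0,|x_{s,0}|+g(\overline r)]$ one has $\frac{\partial}{\partial r}V(r,x_s)\leq h(\overline r)\,r$; (A2) the scalar gradient system $\dot r=-\frac{\partial}{\partial r}V(r,x_s)$ (with parameter $x_s$) has an equilibrium at $r=0$ which undergoes a subcritical pitchfork bifurcation at $x_s=\underline{x}_s$; more precisely there is $\overline{x}_s>\underline{x}_s$ such that for $x_s<\underline x_s$ it has two locally asymptotically stable equilibria $r=\pm r^*$; for $\underline x_s<x_s<\overline x_s$ it has three locally asymptotically stable equilibria $r=-r^*,0,r^*$ with $\partial r^*/\partial x_s<0$; and for $x_s>\overline x_s$, $r=0$ is globally asymptotically stable. Let $\mathbf{u}\in\mathcal{H}$ be constant with $\lVert\mathbf{u}\rVert>b/\alpha$,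 and let $(\mathbf{x}(t),x_s(t))$ be the solution, defined for $t\geq0$, of $$\tau\dot{\mathbf{x}}=-\frac{\partial}{\partial\mathbf{x}}V(\lVert\mathbf{x}\rVert,x_s)+\alpha\mathbf{u},\qquad \tau_s\dot{x}_s=-x_s+g(\lVert\mathbf{x}\rVert),$$ with $(\mathbf{x}(0),x_s(0))=(\mathbf{x}_0,x_{s,0})$. Then there exist a time $T\geq0$ and constants $\underline r,\overline r\in\mathbb{R}_{>0}$ such that $\lVert\mathbf{x}(t)\rVert\in[\underline r,\overline r]$ for all $t\geq T$.
   Context: $\frac{\partial}{\partial\mathbf{x}}V(\lVert\mathbf{x}\rVert,x_s)$ denotes the gradient in $\mathcal{H}$ of $\mathbf{x}\mapsto V(\lVert\mathbf{x}\rVert,x_s)$, equal to $\frac{\partial V}{\partial r}(\lVert\mathbf{x}\rVert,x_s)\,\mathbf{x}/\lVert\mathbf{x}\rVert$ for $\mathbf{x}\neq0$. Solutions are assumed to exist on $\mathbb{R}_{\geq0}$ for all initial conditions in $\mathcal{H}\times\mathbb{R}_{\geq0}$. *)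

From HB Require Import structures.
From mathcomp Require Import all_boot all_order all_algebra.
From mathcomp Require Import all_classical all_reals all_analysis.
Set Implicit Arguments. Unset Strict Implicit. Unset Printing Implicit Defensive.
Import Order.TTheory GRing.Theory Num.Theory.
Import numFieldNormedType.Exports.
Local Open Scope classical_set_scope.
Local Open Scope ring_scope.

(* [ip] is an inner product on H inducing the norm of H:
   symmetric, linear in the first argument, and ||x||^2 = <x,x>.
   Together with completeness of H this makes (H, ip) a real Hilbert space. *)
Definition inner_product_inducing_norm {R : realType} {H : normedModType R}
  (ip : H -> H -> R) : Prop :=
  [/\ forall x y, ip x y = ip y x,
      forall a x y z, ip (a *: x + y) z = a * ip x z + ip y z &
      forall x, `|x| ^+ 2 = ip x x].

Definition scalar_sol {R : realType} (f : R -> R) (r : R -> R) : Prop :=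
  {within `[0, +oo[, continuous r} /\
  forall t : R, 0 < t -> is_derive t 1 r (f (r t)).

Definition equilibrium {R : realType} (f : R -> R) (p : R) : Prop := f p = 0.

Definition lyap_stable {R : realType} (f : R -> R) (p : R) : Prop :=
  forall e : R, 0 < e -> exists2 d : R, 0 < d &
    forall r, scalar_sol f r -> `|r 0 - p| < d ->
      forall t : R, 0 <= t -> `|r t - p| < e.

Definition loc_asym_stable_eq {R : realType} (f : R -> R) (p : R) : Prop :=
  [/\ equilibrium f p, lyap_stable f p &
      exists2 d : R, 0 < d &
        forall r, scalar_sol f r -> `|r 0 - p| < d -> r t @[t --> +oo] --> p].

Definition glob_asym_stable_eq {R : realType} (f : R -> R) (p : R) : Prop :=
  [/\ equilibrium f p, lyap_stable f p &
      forall r, scalar_sol f r -> r t @[t --> +oo] --> p].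

From HB Require Import structures.
From mathcomp Require Import all_boot all_order all_algebra.
From mathcomp Require Import all_classical all_reals all_analysis.
From mathcomp Require Import ring lra.
Import Order.TTheory GRing.Theory Num.Theory.
Import numFieldNormedType.Exports.
Local Open Scope classical_set_scope.
Local Open Scope ring_scope.

(* The drive alpha u pulls x towards the direction of u.  Write y := <x, u>.  Along the flow
   tau y' = alpha |u|^2 - (dV/dr / |x|) y, and as long as y stays below a small level m this
   is bounded below by a positive constant: for y < 0 the lower bound dV/dr >= -b of (A1)
   costs at most b |u| < alpha |u|^2, for 0 <= y < m the upper bound dV/dr <= h(rb) |x|
   costs at most h(rb) m.  Hence y reaches m in finite time and never drops below it again,
   so |x| >= m / |u| from then on.  The bounds needed for this come from barrier arguments:
   x_s stays in [0, |x_s0| + g(rb)], and |x| never exceeds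
   rb = max(|x0|, (b + alpha |u|) / a) because a r - b <= dV/dr makes |x|^2 decrease
   beyond (b + alpha |u|) / a. *)

Section RealDerivative.
Context {R : realType} {V : normedModType R}.

Lemma is_derive1_quotientP (f : R -> V) (t : R) (l : V) :
  is_derive t 1 f l <-> (fun h => h^-1 *: (f (h + t) - f t)) @ 0^' --> l.
Proof.
have E : (fun h => h^-1 *: ((f \o shift t) (h *: (1 : R)) - f t)) =
          (fun h => h^-1 *: (f (h + t) - f t)).
  by apply: funext => h; rewrite /= [h *: _]mulr1.
split=> [fl|ql].
  by rewrite -E; apply: cvg_toP; [exact: ex_derive | exact: derive_val].
by apply: DeriveDef; rewrite /derivable /derive E; [apply: cvgP ql | apply: cvg_lim].
Qed.

Lemma is_derive_continuous {f : R -> V} {t : R} {l : V} :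
  is_derive t 1 f l -> {for t, continuous f}.
Proof. by move=> fl; apply/differentiable_continuous/derivable1_diffP/ex_derive. Qed.

End RealDerivative.

Section Barrier.
Context {R : realType} {f df : R -> R} {t0 : R}.
Hypotheses (f_cont : {within `[t0, +oo[, continuous f})
  (f_deriv : forall t, t0 < t -> is_derive t 1 f (df t)).

Lemma last_sublevel_point {c t1 : R} : t0 <= t1 -> f t0 <= c ->
  exists s, [/\ t0 <= s <= t1, f s <= c & forall t, s < t <= t1 -> c < f t].
Proof.
move=> t01 f0c; pose S := [set t | t0 <= t <= t1 /\ f t <= c].
have S0 : S t0 by rewrite /S /= lexx t01.
have supS : has_sup S by split; [exists t0 | exists t1 => t [/andP[]]].
have s0 : t0 <= sup S := sup_upper_bound supS S0.
have s1 : sup S <= t1 by apply: ge_sup; [exists t0 | move=> t [/andP[]]].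
exists (sup S); split; first by rewrite s0.
- have [<-//|t0s] := eqVneq t0 (sup S).
  have {}t0s : t0 < sup S by rewrite lt_neqAle t0s.
  rewrite leNgt; apply/negP => cfs.
  have [e /= e0 fe] : nbhs_ball (sup S) (fun t => c < f t).
    exact/nbhs_ballP/(cvgr_gt _ (is_derive_continuous (f_deriv _ t0s)) _ cfs).
  have [t St st] := sup_adherent e0 supS.
  have ts : t <= sup S := sup_upper_bound supS St.
  have [_ ftc] := St.
  have : c < f t by apply: fe; rewrite /ball /= ger0_norm ?subr_ge0 //; lra.
  by rewrite ltNge ftc.
- move=> t /andP[st tt1]; rewrite ltNge; apply/negP => ftc.
  have : t <= sup S.
    by apply: sup_upper_bound => //; split; rewrite // tt1 (le_trans s0 (ltW st)).
  by rewrite leNgt st.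
Qed.

Lemma barrier_le c : f t0 <= c -> (forall t, t0 < t -> c < f t -> df t <= 0) ->
  forall t, t0 <= t -> f t <= c.
Proof.
move=> f0c df_le t1 t01; rewrite leNgt; apply/negP => cf1.
have [s [/andP[t0s st1] fsc above]] := last_sublevel_point t01 f0c.
have {}st1 : s < t1.
  by rewrite lt_neqAle st1 andbT; apply: contraTneq cf1 => <-; rewrite -leNgt.
have [xi] : exists2 xi, xi \in `]s, t1[ & f t1 - f s = df xi * (t1 - s).
  apply: MVT => // [xi|]; first by rewrite in_itv => /andP[/(le_lt_trans t0s)/f_deriv].
  apply: continuous_subspaceW f_cont => z /=; rewrite !in_itv /= andbT.
  by move=> /andP[/(le_trans t0s)].
rewrite in_itv /= => /andP[sxi xit] fE.
have : df xi <= 0 by apply: df_le; [exact: le_lt_trans sxi | rewrite above ?sxi ?ltW].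
have : 0 < t1 - s by rewrite subr_gt0.
nra.
Qed.

End Barrier.

Lemma barrier_ge {R : realType} {f df : R -> R} {t0 c : R} :
  {within `[t0, +oo[, continuous f} ->
  (forall t, t0 < t -> is_derive t 1 f (df t)) ->
  c <= f t0 -> (forall t, t0 < t -> f t < c -> 0 <= df t) ->
  forall t, t0 <= t -> c <= f t.
Proof.
move=> f_cont f_deriv cf0 df_ge t t0t; rewrite -lerN2.
apply: (barrier_le (f := - f) (df := - df) (t0 := t0)) => //.
- by move=> s; apply: cvgN; apply: f_cont.
- by move=> s /f_deriv; apply: is_deriveN.
- by rewrite fctE lerN2.
- by move=> s t0s; rewrite !fctE ltrN2 oppr_le0; apply: df_ge.
Qed.

Lemma rate_reaches_level {R : realType} {f df : R -> R} {t0 m d : R} :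
  {within `[t0, +oo[, continuous f} ->
  (forall t, t0 < t -> is_derive t 1 f (df t)) ->
  0 < d -> (forall t, t0 < t -> f t < m -> d <= df t) ->
  exists2 t1, t0 <= t1 & m <= f t1.
Proof.
move=> f_cont f_deriv d0 df_ge; apply: contrapT => unreached.
have below t : t0 <= t -> f t < m.
  by move=> t0t; rewrite ltNge; apply/negP => mf; apply: unreached; exists t.
pose L := (m - f t0) / d.
have L0 : 0 < L by rewrite divr_gt0 // subr_gt0 below.
have [xi /andP[t0xi _] fE] : exists2 xi, xi \in `]t0, t0 + L[ &
    f (t0 + L) - f t0 = df xi * (t0 + L - t0).
  apply: MVT => [|xi /andP[t0xi _]|]; first by rewrite ltrDl.
    exact: f_deriv.
  by apply: continuous_subspaceW f_cont => z /=; rewrite !in_itv /= andbT => /andP[].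
have : d <= df xi by apply: df_ge; rewrite ?below ?ltW.
have : d * L = m - f t0 by rewrite mulrC divfK ?gt_eqF.
have := below (t0 + L); rewrite lerDl ltW // => /(_ isT).
move: fE; rewrite addrAC subrr add0r; nra.
Qed.

Lemma eventually_ge_of_rate {R : realType} {f df : R -> R} {t0 m d : R} :
  {within `[t0, +oo[, continuous f} ->
  (forall t, t0 < t -> is_derive t 1 f (df t)) ->
  0 < d -> (forall t, t0 < t -> f t < m -> d <= df t) ->
  exists2 T, t0 <= T & forall t, T <= t -> m <= f t.
Proof.
move=> f_cont f_deriv d0 df_ge.
have [t1 t01 mf1] := rate_reaches_level f_cont f_deriv d0 df_ge.
exists t1 => //; apply: (barrier_ge (df := df)) => //.
- apply: continuous_subspaceW f_cont => z /=; rewrite !in_itv /= !andbT.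
  exact: le_trans.
- by move=> t /(le_lt_trans t01)/f_deriv.
- move=> t /(le_lt_trans t01) t0t ftm.
  exact: le_trans (ltW d0) (df_ge _ t0t ftm).
Qed.

Section InnerProduct.
Context {R : realType} {H : normedModType R} {ip : H -> H -> R}.
Hypothesis ipP : inner_product_inducing_norm ip.

Lemma ipC x y : ip x y = ip y x.
Proof. by case: ipP. Qed.

Lemma ipxx x : ip x x = `|x| ^+ 2.
Proof. by case: ipP. Qed.

Lemma ip0l z : ip 0 z = 0.
Proof. by case: ipP => _ lin _; have := lin 1 0 0 z; rewrite scaler0 addr0 mul1r; lra. Qed.

Lemma ipDl x y z : ip (x + y) z = ip x z + ip y z.
Proof. by case: ipP => _ lin _; rewrite -[x]scale1r lin mul1r scale1r. Qed.

Lemma ipZl a x z : ip (a *: x) z = a * ip x z.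
Proof. by case: ipP => _ lin _; rewrite -[a *: x]addr0 lin ip0l addr0. Qed.

Lemma ipBl x y z : ip (x - y) z = ip x z - ip y z.
Proof. by rewrite ipDl -scaleN1r ipZl mulN1r. Qed.

Lemma ipDr x y z : ip z (x + y) = ip z x + ip z y.
Proof. by rewrite !(ipC z) ipDl. Qed.

Lemma ipZr a x z : ip z (a *: x) = a * ip z x.
Proof. by rewrite !(ipC z) ipZl. Qed.

Lemma ipBr x y z : ip z (x - y) = ip z x - ip z y.
Proof. by rewrite !(ipC z) ipBl. Qed.

Lemma ip_polar x y : ip x y = (`|x + y| ^+ 2 - `|x| ^+ 2 - `|y| ^+ 2) / 2.
Proof. by rewrite -!ipxx ipDl !ipDr (ipC y x); field. Qed.

Lemma ip_le_norm x y : ip x y <= `|x| * `|y|.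
Proof.
have [->|/negPf x0] := eqVneq x 0; first by rewrite ip0l normr0 mul0r.
have [->|/negPf y0] := eqVneq y 0; first by rewrite ipC ip0l normr0 mulr0.
have xy0 : 0 < `|x| * `|y| by rewrite mulr_gt0 // normr_gt0 ?x0 ?y0.
have := sqr_ge0 (Num.norm (`|y| *: x - `|x| *: y)).
rewrite -ipxx ipBl !ipBr !ipZl !ipZr !ipxx (ipC y x).
nra.
Qed.

Lemma ip_ge_norm x y : - (`|x| * `|y|) <= ip x y.
Proof.
by rewrite lerNl -mulN1r -ipZr scaleN1r -(normrN y) ip_le_norm.
Qed.

Lemma cvg_ip {T : Type} {F : set_system T} {FF : Filter F} (f g : T -> H) p q :
  f @ F --> p -> g @ F --> q -> (fun t => ip (f t) (g t)) @ F --> ip p q.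
Proof.
move=> fp gq; under eq_fun do rewrite ip_polar; rewrite ip_polar.
have cvg_sqr (k : T -> H) r : k @ F --> r -> `|k t| ^+ 2 @[t --> F] --> `|r| ^+ 2.
  by move=> /cvg_norm kr; have := continuous_cvg FF (@exprn_continuous R 2 `|r|) kr.
by apply: cvgMl; apply: cvgB; [apply: cvgB|]; apply: cvg_sqr => //; apply: cvgD.
Qed.

Lemma is_derive_ip {f g : R -> H} {t : R} {df dg : H} :
  is_derive t 1 f df -> is_derive t 1 g dg ->
  is_derive t 1 (fun s => ip (f s) (g s)) (ip df (g t) + ip (f t) dg).
Proof.
move=> fd gd; apply/is_derive1_quotientP => /=.
have g_shift : (fun h => g (h + t)) @ 0^' --> g t.
  have shift_t : (fun h => h + t) @ 0^' --> t.
    apply: cvg_within_filter.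
    have : (fun h => h + t) @ 0 --> 0 + t.
      by apply: cvgD; [exact: cvg_id | exact: cvg_cst].
    by rewrite add0r.
  exact: (cvg_comp _ _ shift_t (is_derive_continuous gd)).
have -> : (fun h => h^-1 *: (ip (f (h + t)) (g (h + t)) - ip (f t) (g t))) =
    (fun h => ip (h^-1 *: (f (h + t) - f t)) (g (h + t)) +
              ip (f t) (h^-1 *: (g (h + t) - g t))).
  by apply: funext => h; rewrite ipZl ipZr ipBl ipBr -mulrDr addrA subrK.
apply: cvgD; apply: cvg_ip => //.
- exact/is_derive1_quotientP.
- exact: cvg_cst.
- exact/is_derive1_quotientP.
Qed.

End InnerProduct.

Section FirstOrderLag.
Context {R : realType} {taus : R} {z dz w : R -> R}.
Hypotheses (taus_gt0 : 0 < taus) (z_cont : {within `[0, +oo[, continuous z})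
  (z_deriv : forall t : R, 0 < t -> is_derive t 1 z (dz t))
  (z_ode : forall t : R, 0 < t -> taus * dz t = - z t + w t).

Lemma lag_ge (c : R) : c <= z 0 -> (forall t : R, 0 < t -> c <= w t) ->
  forall t : R, 0 <= t -> c <= z t.
Proof.
move=> cz0 cw; apply: barrier_ge => // t t0 ztc.
by rewrite -(pmulr_rge0 _ taus_gt0) z_ode //; have := cw _ t0; lra.
Qed.

Lemma lag_le (c : R) : z 0 <= c -> (forall t : R, 0 < t -> w t <= c) ->
  forall t : R, 0 <= t -> z t <= c.
Proof.
move=> zc0 wc; apply: barrier_le => // t t0 czt.
by rewrite -oppr_ge0 -(pmulr_rge0 _ taus_gt0) mulrN z_ode //; have := wc _ t0; lra.
Qed.

End FirstOrderLag.

Section Trajectory.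
Context {R : realType} {H : normedModType R} {ip : H -> H -> R}.
(* k t plays the role of dV/dr (|x t|, x_s t); only its bounds along the trajectory matter. *)
Context {tau alpha a b K : R} {u : H} {k : R -> R} {x dx : R -> H}.
Hypotheses (ipP : inner_product_inducing_norm ip)
  (tau_gt0 : 0 < tau) (alpha_gt0 : 0 < alpha)
  (x_cont : {within `[0, +oo[, continuous x})
  (x_deriv : forall t : R, 0 < t -> is_derive t 1 x (dx t))
  (x_ode : forall t : R, 0 < t ->
     tau *: dx t = - (k t * `|x t|^-1) *: x t + alpha *: u)
  (a_gt0 : 0 < a) (b_ge0 : 0 <= b) (b_lt : b < alpha * `|u|)
  (k_ge : forall t : R, 0 < t -> a * `|x t| - b <= k t).

Lemma ip_ode v (t : R) : 0 < t ->
  tau * ip v (dx t) = - (k t / `|x t|) * ip v (x t) + alpha * ip v u.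
Proof. by move=> t0; rewrite -(ipZr ipP) x_ode // (ipDr ipP) !(ipZr ipP). Qed.

Lemma norm_trajectory_le (t : R) : 0 <= t ->
  `|x t| <= Num.max `|x 0| ((b + alpha * `|u|) / a).
Proof.
set rb := Num.max _ _.
have rb_ge0 : 0 <= rb by rewrite le_max normr_ge0.
have le_sqr s : (`|x s| ^+ 2 <= rb ^+ 2) = (`|x s| <= rb).
  by rewrite ler_sqr ?nnegrE.
rewrite -le_sqr -(ipxx ipP); move: t.
apply: (barrier_le (df := fun s => ip (dx s) (x s) + ip (x s) (dx s)) (t0 := 0)).
- by move=> s; apply: (cvg_ip ipP); apply: x_cont.
- by move=> s /x_deriv xd; apply: is_derive_ip.
- by rewrite (ipxx ipP) le_sqr le_max lexx.
move=> s s0; rewrite (ipxx ipP) ltNge le_sqr -ltNge (ipC ipP (dx s)) => rb_lt.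
have r_gt0 : 0 < `|x s| := le_lt_trans rb_ge0 rb_lt.
have gap : b + alpha * `|u| < a * `|x s|.
  rewrite -ltr_pdivrMl // mulrC; apply: le_lt_trans rb_lt.
  by rewrite le_max lexx orbT.
have ode := ip_ode (x s) _ s0.
rewrite (ipxx ipP) mulNr expr2 mulrA divfK ?gt_eqF // in ode.
suff : tau * ip (x s) (dx s) < 0 by rewrite pmulr_rlt0 //; lra.
have kr : (a * `|x s| - b) * `|x s| <= k s * `|x s| by rewrite ler_pM2r ?k_ge.
have yu : alpha * ip (x s) u <= alpha * (`|x s| * `|u|) by rewrite ler_pM2l ?ip_le_norm.
rewrite ode; nra.
Qed.

Hypotheses (K_ge0 : 0 <= K) (k_le : forall t : R, 0 < t -> k t <= K * `|x t|).

(* Chosen so that K m <= alpha |u|^2 / 2. *)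
Let m := alpha * `|u| ^+ 2 / (2 * (K + 1)).
Let d := `|u| * (alpha * `|u| - b) / 2.

Let u_gt0 : 0 < `|u|.
Proof. by rewrite -(pmulr_rgt0 _ alpha_gt0); apply: le_lt_trans b_lt. Qed.

Lemma ip_u_rate (t : R) : 0 < t -> ip (x t) u < m -> d <= tau * ip (dx t) u.
Proof.
move=> t0 y_lt; rewrite (ipC ipP) ip_ode // (ipC ipP u) (ipxx ipP).
have d_le : d <= alpha * `|u| ^+ 2 / 2.
  by rewrite /d ler_pM2r //; have := mulr_ge0 (normr_ge0 u) b_ge0; nra.
have [y_ge0|y_lt0] := leP 0 (ip (x t) u).
- have c_le : k t / `|x t| <= K.
    have [->|/negPf r0] := eqVneq `|x t| 0; first by rewrite invr0 mulr0.
    by rewrite ler_pdivrMr ?k_le // lt_def r0 normr_ge0.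
  have Km : K * m <= alpha * `|u| ^+ 2 / 2.
    have K1 : 0 < K + 1 by rewrite ltr_wpDl.
    have -> : K * m = alpha * `|u| ^+ 2 / 2 * (K / (K + 1)).
      by rewrite /m; field; rewrite gt_eqF.
    rewrite ler_piMr ?divr_ge0 ?mulr_ge0 ?sqr_ge0 ?(ltW alpha_gt0) //.
    by rewrite ler_pdivrMr // mul1r lerDl.
  have : k t / `|x t| * ip (x t) u <= K * m.
    by apply: le_trans (ler_wpM2r y_ge0 c_le) _; rewrite ler_wpM2l // ltW.
  lra.
have r_gt0 : 0 < `|x t|.
  rewrite lt_neqAle normr_ge0 andbT eq_sym; apply: contraTneq y_lt0.
  by move/normr0_eq0 => ->; rewrite (ip0l ipP) ltxx.
(* For <x, u> < 0 only k >= -b is used, through -(k / |x|) <x, u> = k q with 0 <= q <= |u|. *)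
pose q := - ip (x t) u / `|x t|.
have q_ge0 : 0 <= q by rewrite divr_ge0 ?oppr_ge0 ?ltW.
have q_le : q <= `|u|.
  by rewrite ler_pdivrMr // mulrC lerNl ip_ge_norm.
have -> : - (k t / `|x t|) * ip (x t) u = k t * q by rewrite /q; ring.
have : - b * q <= k t * q.
  rewrite ler_wpM2r //; have := k_ge _ t0.
  have := mulr_ge0 (ltW a_gt0) (normr_ge0 (x t)); lra.
have : b * q <= b * `|u| by rewrite ler_wpM2l.
have : 0 < `|u| * (alpha * `|u| - b) by rewrite mulr_gt0 ?u_gt0 ?subr_gt0.
rewrite /d; nra.
Qed.

Lemma ip_u_eventually_ge : exists2 T, 0 <= T & forall t, T <= t -> m <= ip (x t) u.
Proof.
have d_gt0 : 0 < d by rewrite divr_gt0 // mulr_gt0 ?u_gt0 ?subr_gt0.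
apply: (eventually_ge_of_rate (f := fun t => ip (x t) u)
  (df := fun t => ip (dx t) u) (d := d / tau)).
- by move=> s; apply: (cvg_ip ipP); [apply: x_cont | apply: cvg_cst].
- move=> s /x_deriv xd; have := is_derive_ip ipP xd (is_derive_cst u s 1).
  by rewrite (ipC ipP _ 0) (ip0l ipP) addr0.
- by rewrite divr_gt0.
- by move=> s s0 y_lt; rewrite ler_pdivrMr // mulrC ip_u_rate.
Qed.

Lemma norm_trajectory_eventually_ge :
  exists2 rl : R, 0 < rl & exists2 T, 0 <= T & forall t, T <= t -> rl <= `|x t|.
Proof.
have [T T0 y_ge] := ip_u_eventually_ge.
exists (m / `|u|); first by rewrite !divr_gt0 ?mulr_gt0 ?exprn_gt0 ?u_gt0 ?ltr_wpDl.
exists T => // t Tt; rewrite ler_pdivrMr ?u_gt0 //.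
exact: le_trans (y_ge t Tt) (ip_le_norm ipP _ _).
Qed.

End Trajectory.

Theorem lemma1 (R : realType) (H : completeNormedModType R) (ip : H -> H -> R)
  (tau taus alpha : R) (g : R -> R)
  (V dVr dVs : R -> R -> R) (xs0 : R) (x0 : H)
  (a b : R) (h : R -> R) (xlo xhi : R) (rstar : R -> R)
  (u : H) (x : R -> H) (xs : R -> R) (dx : R -> H) (dxs : R -> R) :
  (* Hilbert space structure *)
  inner_product_inducing_norm ip ->
  0 < tau -> 0 < taus -> 0 < alpha ->
  (* g in C^0(R>=0, R>=0), monotone increasing, g(0) = 0 *)
  {within `[0, +oo[, continuous g} ->
  (forall r, 0 <= r -> 0 <= g r) ->
  {in `[0, +oo[ &, {homo g : r1 r2 / r1 <= r2}} ->
  g 0 = 0 ->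
  (* V in C^1(R^2, R): dVr, dVs are its partial derivatives, jointly continuous *)
  (forall r s : R, is_derive r 1 (fun r' => V r' s) (dVr r s)) ->
  (forall r s : R, is_derive s 1 (fun s' => V r s') (dVs r s)) ->
  continuous (fun p : R * R => dVr p.1 p.2) ->
  continuous (fun p : R * R => dVs p.1 p.2) ->
  0 <= xs0 ->
  (* (A1) *)
  0 < a -> 0 <= b ->
  {within `[0, +oo[, continuous h} ->
  (forall r, 0 <= r -> 0 <= h r) ->
  {in `[0, +oo[ &, {homo h : r1 r2 / r1 <= r2}} ->
  h 0 = 0 ->
  (forall r s, 0 <= r -> 0 <= s -> a * r - b <= dVr r s) ->
  (forall rb r s, 0 <= rb -> 0 <= r <= rb -> 0 <= s <= `|xs0| + g rb ->
     dVr r s <= h rb * r) ->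
  (* (A2): subcritical pitchfork of the equilibrium r = 0 of r' = - dV/dr (r, s) *)
  (forall s, equilibrium (fun r => - dVr r s) 0) ->
  xlo < xhi ->
  (forall s, s < xlo ->
     0 < rstar s /\
     loc_asym_stable_eq (fun r => - dVr r s) (rstar s) /\
     loc_asym_stable_eq (fun r => - dVr r s) (- rstar s)) ->
  (forall s, xlo < s < xhi ->
     [/\ 0 < rstar s,
         loc_asym_stable_eq (fun r => - dVr r s) (- rstar s),
         loc_asym_stable_eq (fun r => - dVr r s) 0,
         loc_asym_stable_eq (fun r => - dVr r s) (rstar s) &
         derivable rstar s 1 /\ derive1 rstar s < 0]) ->
  (forall s, xhi < s -> glob_asym_stable_eq (fun r => - dVr r s) 0) ->
  (* constant input *)
  `|u| > b / alpha ->
  (* (x, xs) is a solution on t >= 0 with the given initial condition *)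
  x 0 = x0 -> xs 0 = xs0 ->
  {within `[0, +oo[, continuous x} ->
  {within `[0, +oo[, continuous xs} ->
  (forall t : R, 0 < t -> is_derive t 1 x (dx t)) ->
  (forall t : R, 0 < t -> is_derive t 1 xs (dxs t)) ->
  (forall t : R, 0 < t ->
     tau *: dx t = - (dVr `|x t| (xs t) * `|x t|^-1) *: x t + alpha *: u) ->
  (forall t : R, 0 < t -> taus * dxs t = - xs t + g `|x t|) ->
  exists T : R, exists rl : R, exists ru : R,
    [/\ 0 <= T, 0 < rl, 0 < ru &
        forall t : R, T <= t -> rl <= `|x t| <= ru].
Proof.
move=> ipP tau_gt0 taus_gt0 alpha_gt0 _ g_ge0 g_homo _ _ _ _ _ xs0_ge0 a_gt0 b_ge0
  _ h_ge0 _ _ dV_ge dV_le _ _ _ _ _ u_gt x_0 xs_0 x_cont xs_cont x_deriv xs_deriv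
  x_ode xs_ode.
have b_lt : b < alpha * `|u| by rewrite mulrC -ltr_pdivrMr.
have xs_ge0 : forall t, 0 <= t -> 0 <= xs t.
  by apply: (lag_ge taus_gt0 xs_cont xs_deriv xs_ode) => [|t _]; rewrite ?xs_0 ?g_ge0.
have k_ge t : 0 < t -> a * `|x t| - b <= dVr `|x t| (xs t).
  by move=> t0; apply: dV_ge; [exact: normr_ge0 | exact/xs_ge0/ltW].
have := norm_trajectory_le ipP tau_gt0 alpha_gt0 x_cont x_deriv x_ode a_gt0 k_ge.
rewrite x_0; set rb := Num.max _ _ => x_le.
have rb_gt0 : 0 < rb.
  by rewrite lt_max divr_gt0 ?orbT // ltr_wpDl // (le_lt_trans b_ge0 b_lt).
have xs_le : forall t, 0 <= t -> xs t <= `|xs0| + g rb.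
  apply: (lag_le taus_gt0 xs_cont xs_deriv xs_ode) => [|t t0].
    by rewrite xs_0 ger0_norm // lerDl g_ge0 // ltW.
  apply: le_trans (ler_wpDl (normr_ge0 _) (lexx _)).
  by apply: g_homo; rewrite ?in_itv /= ?normr_ge0 ?x_le ?ltW.
have k_le t : 0 < t -> dVr `|x t| (xs t) <= h rb * `|x t|.
  by move=> t0; apply: dV_le; rewrite ?normr_ge0 ?x_le ?xs_ge0 ?xs_le ?ltW.
have [rl rl_gt0 [T T_ge0 x_ge]] := norm_trajectory_eventually_ge ipP tau_gt0
  alpha_gt0 x_cont x_deriv x_ode a_gt0 b_ge0 b_lt k_ge (h_ge0 _ (ltW rb_gt0)) k_le.
exists T, rl, rb; split => // t Tt.
by rewrite x_ge // x_le // (le_trans T_ge0).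
Qed.
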